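(* Consider binary operation $\wedge$ on $\{0,1\}$ defined by $1\wedge1=1\wedge0=0\wedge0=1$ and $0\wedge1=0$. For $n\ge0$, the number of walks $0=y_0,y_1,\dots,y_n=1$ with steps $y_i-y_{i-1}\in\{-2,-1,1,2\}$ and $y_i\ge0$ for all $i$ equals the number of complete bracketings (full binary parenthesizations) of the word $0\wedge0\wedge\cdots\wedge0$ with $n+2$ zeroes whose value is $0$. *)

From mathcomp Require Import all_boot all_order all_algebra.
From Stdlib Require Import List.
Set Implicit Arguments. Unset Strict Implicit. Unset Printing Implicit Defensive.
Import GRing.Theory Num.Theory.

(* The values 0 and 1 are encoded as false and true. *)
Definition wedge (a b : bool) : bool :=
  match a, b with
  | true, true => true
  | true, false => true
  | false, false => true
  | false, true => false
  end.

(* Full binary parenthesizations of a word all of whose letters are 0: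
   binary trees whose leaves are the zeroes. *)
Inductive bracketing : Type :=
  | Leaf : bracketing
  | Node : bracketing -> bracketing -> bracketing.

Fixpoint nleaves (t : bracketing) : nat :=
  match t with
  | Leaf => 1
  | Node l r => nleaves l + nleaves r
  end.

Fixpoint bval (t : bracketing) : bool :=
  match t with
  | Leaf => false
  | Node l r => wedge (bval l) (bval r)
  end.

Definition stepv (k : 'I_4) : int :=
  match val k with
  | 0 => (-2)%R
  | 1 => (-1)%R
  | 2 => 1%R
  | _ => 2%R
  end.

Definition wpos n (t : n.-tuple 'I_4) (i : nat) : int :=
  (\sum_(s <- take i (map stepv t)) s)%R.

Definition good_walk n (t : n.-tuple 'I_4) : bool :=
  [forall i : 'I_n.+1, (0 <= wpos t i)%R] && (wpos t n == 1%R).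

From HB Require Import structures.
From mathcomp Require Import all_boot all_order all_algebra.
From mathcomp Require Import zify ring.
From Stdlib Require Import Setoid Morphisms.
Set Implicit Arguments. Unset Strict Implicit. Unset Printing Implicit Defensive.
Import GRing.Theory Num.Theory.

(** Both counts are the coefficients of a power series A solving
      A = x (1 + x A)^2 ((1 + x A)^2 + A),
    an equation of the form A = x Phi(A), which has only one solution.

    Bracketings: a product is 0 exactly when its left factor is 0 and its right
    factor is 1, so the series F and G of bracketings of value 0 and 1 (counted
    by leaves) satisfy F = x + F G and G = F^2 + G (F + G).  Hence
    x (F - x) = F^2 (G - G^2) = F^2 (F^2 + F - x), and F = x + x^2 A.

    Walks: let E, A, D, C count the walks 0 -> 0, 0 -> 1, 0 -> 2 and 1 -> 1.
    The last step into 0 gives E = 1 + x (A + D); cutting a walk at its last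
    visit to 0 gives A = x E (E + A), D = x E (A + C) and C = E + x A (E + A).
    Hence D = A (1 + x A), E = (1 + x A)^2 and A = x Phi(A).

    Power series are represented by polynomials compared below a degree bound. *)

(** * Truncated power series *)

Local Open Scope ring_scope.

Definition eqmodX (R : nzRingType) (N : nat) (p q : {poly R}) :=
  forall i, (i < N)%N -> p`_i = q`_i.

Section EqmodX.
Variable R : nzRingType.
Implicit Types p q r : {poly R}.

Lemma eqmodX_refl N : Reflexive (@eqmodX R N). Proof. by []. Qed.
Lemma eqmodX_sym N : Symmetric (@eqmodX R N). Proof. by move=> p q e i /e. Qed.
Lemma eqmodX_trans N : Transitive (@eqmodX R N).
Proof. by move=> p q r e1 e2 i lt_iN; rewrite e1 ?e2. Qed.

Lemma eqmodX_eq N p q : p = q -> eqmodX N p q. Proof. by move=> ->. Qed.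

Lemma eqmodX_le M N p q : (M <= N)%N -> eqmodX N p q -> eqmodX M p q.
Proof. by move=> le_MN e i lt_iM; rewrite e // (leq_trans lt_iM). Qed.

Lemma eqmodX_mulX N p q : eqmodX N p q -> eqmodX N.+1 ('X * p) ('X * q).
Proof. by move=> e [|i] lt_iN; rewrite !coefXM //= e. Qed.

Lemma eqmodX_mulXnI N k p q : eqmodX (N + k) ('X^k * p) ('X^k * q) -> eqmodX N p q.
Proof.
move=> e i lt_iN; have := e (i + k)%N.
by rewrite !coefXnM ltn_add2r (ltnNge (i + k) k) leq_addl addnK; apply.
Qed.

End EqmodX.

Add Parametric Relation (R : nzRingType) (N : nat) : {poly R} (@eqmodX R N)
  reflexivity proved by (@eqmodX_refl R N)
  symmetry proved by (@eqmodX_sym R N)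
  transitivity proved by (@eqmodX_trans R N) as eqmodX_rel.

Add Parametric Morphism (R : nzRingType) (N : nat) : (@GRing.add {poly R})
  with signature @eqmodX R N ==> @eqmodX R N ==> @eqmodX R N as eqmodX_add.
Proof. by move=> p p' ep q q' eq i lt_iN; rewrite !coefD ep ?eq. Qed.

Add Parametric Morphism (R : nzRingType) (N : nat) : (@GRing.mul {poly R})
  with signature @eqmodX R N ==> @eqmodX R N ==> @eqmodX R N as eqmodX_mul.
Proof.
move=> p p' ep q q' eq i lt_iN; rewrite !coefM; apply: eq_bigr => j _.
by rewrite ep ?eq // (leq_ltn_trans _ lt_iN) ?leq_subr // -ltnS.
Qed.

Add Parametric Morphism (R : nzRingType) (N : nat) : (@GRing.exp {poly R})
  with signature @eqmodX R N ==> eq ==> @eqmodX R N as eqmodX_exp.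
Proof.
move=> p q e k; elim: k => [|k IH]; first by rewrite !expr0.
by rewrite !exprS IH e.
Qed.

Definition Phi (R : nzRingType) (p : {poly R}) : {poly R} :=
  (1 + 'X * p) ^+ 2 * ((1 + 'X * p) ^+ 2 + p).

Add Parametric Morphism (R : nzRingType) (N : nat) : (@Phi R)
  with signature @eqmodX R N ==> @eqmodX R N as eqmodX_Phi.
Proof. by move=> p q e; rewrite /Phi e. Qed.

Lemma eqmodX_fixpoint (R : nzRingType) N (p q : {poly R}) :
  eqmodX N p ('X * Phi p) -> eqmodX N q ('X * Phi q) -> eqmodX N p q.
Proof.
move=> ep eq; suff: forall k, (k <= N)%N -> eqmodX k p q by apply.
elim=> [|k IH] le_kN; first by [].
have e : eqmodX k.+1 ('X * Phi p) ('X * Phi q) by apply: eqmodX_mulX; rewrite IH // ltnW.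
by rewrite (eqmodX_le le_kN ep) (eqmodX_le le_kN eq).
Qed.

Definition gf (L : nat) (u : nat -> nat) : {poly int} := \poly_(i < L) (u i)%:R.

Lemma coef_gf L u i : (gf L u)`_i = if (i < L)%N then (u i)%:R else 0.
Proof. exact: coef_poly. Qed.

Lemma gfD L u v : gf L u + gf L v = gf L (fun i => u i + v i)%N.
Proof. by apply/polyP => i; rewrite coefD !coef_gf natrD; case: ifP; rewrite ?addr0. Qed.

Lemma coef_gfM L u v i : (i < L)%N ->
  (gf L u * gf L v)`_i = (\sum_(j < i.+1) u j * v (i - j))%N%:R.
Proof.
move=> lt_iL; rewrite coefM natr_sum; apply: eq_bigr => j _.
by rewrite !coef_gf natrM !(leq_ltn_trans _ lt_iL) ?leq_subr // -ltnS.
Qed.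

Local Close Scope ring_scope.

(** * Bracketings *)

Definition bracketing_eq_dec : comparable bracketing.
Proof. by rewrite /comparable /decidable; decide equality. Defined.

HB.instance Definition _ := comparableMixin bracketing_eq_dec.

Fixpoint trees_fuel (fuel m : nat) : seq bracketing :=
  if fuel is f.+1 then
    if m == 1 then [:: Leaf] else
    flatten [seq [seq Node l r | l <- trees_fuel f i, r <- trees_fuel f (m - i)]
            | i <- iota 1 m.-1]
  else [::].

Definition trees (m : nat) : seq bracketing := trees_fuel m m.

Lemma trees_fuelE f m : m <= f -> trees_fuel f m = trees m.
Proof.
elim/ltn_ind: f m => -[|f] IH [|m] le_mf //; rewrite /trees /=.
have {}IH g j : g <= f -> j <= g -> trees_fuel g j = trees j by move=> ? ?; apply: IH.
case: ifP => // _; congr flatten; apply/eq_in_map => i.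
by rewrite mem_iota => /andP [i_gt0 lt_im]; rewrite !IH //; lia.
Qed.

Lemma treesE m : trees m =
  if m == 1 then [:: Leaf] else
  flatten [seq [seq Node l r | l <- trees i, r <- trees (m - i)] | i <- iota 1 m.-1].
Proof.
case: m => [|m] //; rewrite {1}/trees /=; case: ifP => // _.
congr flatten; apply/eq_in_map => i; rewrite mem_iota => /andP [i_gt0 lt_im].
by rewrite !trees_fuelE //; lia.
Qed.

Lemma nleaves_gt0 t : 0 < nleaves t.
Proof. by elim: t => //= l IHl r IHr; rewrite addn_gt0 IHl. Qed.

Lemma mem_trees m t : (t \in trees m) = (nleaves t == m).
Proof.
elim: t m => [|l IHl r IHr] m; rewrite treesE; case: eqP => [->|/eqP m_neq1] //.
- rewrite eq_sym (negbTE m_neq1).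
  by apply/flatten_mapP => -[i _ /allpairsP [[? ?] [_ _]]].
- by apply/idP/eqP => [/[!inE]/eqP //| /=]; move: (nleaves_gt0 l) (nleaves_gt0 r); lia.
apply/flatten_mapP/eqP => /= [[i] | <-].
  rewrite mem_iota => lim /allpairsP [[a b] /= [la rb [eq_la eq_rb]]].
  by move: la rb; rewrite -eq_la -eq_rb IHl IHr => /eqP li /eqP ri; lia.
exists (nleaves l); first by rewrite mem_iota; move: (nleaves_gt0 l) (nleaves_gt0 r); lia.
by apply/allpairsP; exists (l, r); rewrite IHl IHr addKn.
Qed.

Lemma uniq_flatten_map (I T : eqType) (F : I -> seq T) s :
  uniq s -> {in s, forall i, uniq (F i)} ->
  (forall i j x, x \in F i -> x \in F j -> i = j) -> uniq (flatten (map F s)).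
Proof.
move=> + uF disjF; elim: s uF => //= i s IH uF /andP [i_notin_s us].
have uFs : uniq (flatten [seq F j | j <- s]).
  by apply: IH => // j js; apply: uF; rewrite inE js orbT.
rewrite cat_uniq uF ?mem_head // uFs andbT; apply/hasPn => x /flatten_mapP [j j_in_s xFj].
by apply/negP => xFi; move: i_notin_s; rewrite (disjF _ _ _ xFi xFj) j_in_s.
Qed.

Lemma uniq_trees m : uniq (trees m).
Proof.
elim/ltn_ind: m => m IH; rewrite treesE; case: ifP => // _.
apply: uniq_flatten_map => [|i|i j x]; first exact: iota_uniq.
  rewrite mem_iota => /andP [i_gt0 lt_im].
  by apply: allpairs_uniq; rewrite ?IH //; [lia | lia | move=> [? ?] [? ?] _ _ [-> ->]].
move=> /allpairsP [[a b] /= [+ _ ->]] /allpairsP [[c d] /= [+ _ [eq_ac _]]].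
by rewrite !mem_trees eq_ac => /eqP <- /eqP.
Qed.

Definition nbrack0 m := count (fun t => ~~ bval t) (trees m).
Definition nbrack1 m := count bval (trees m).

Lemma size_trees m : size (trees m) = nbrack0 m + nbrack1 m.
Proof. by rewrite addnC -(count_predC bval). Qed.

Lemma count_trees (P : pred bracketing) m : 1 < m ->
  count P (trees m) =
  \sum_(1 <= i < m) count P [seq Node l r | l <- trees i, r <- trees (m - i)].
Proof.
by move=> m_gt1; rewrite treesE gtn_eqF // count_flatten sumnE !big_map /index_iota subn1.
Qed.

Lemma count_Node0 s1 s2 :
  count (fun t => ~~ bval t) [seq Node l r | l <- s1, r <- s2] =
  count (fun l => ~~ bval l) s1 * count bval s2.
Proof.
elim: s1 => //= l s1 IH; rewrite count_cat IH count_map mulnDl; congr (_ + _).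
by elim: (s2) => [|r s /= ->]; case: (bval l); rewrite ?muln0 //; case: (bval r).
Qed.

Lemma count_Node1 s1 s2 :
  count bval [seq Node l r | l <- s1, r <- s2] =
  count bval s1 * size s2 + count (fun l => ~~ bval l) s1 * count (fun r => ~~ bval r) s2.
Proof.
elim: s1 => //= l s1 IH; rewrite count_cat IH count_map !mulnDl addnACA; congr (_ + _).
by elim: (s2) => [|r s /= ->]; case: (bval l); rewrite ?muln0 //; case: (bval r) => /=; lia.
Qed.

Lemma sum_ord_drop_ends (F : nat -> nat) m : F 0 = 0 -> F m = 0 ->
  \sum_(i < m.+1) F i = \sum_(1 <= i < m) F i.
Proof.
move=> F0 Fm; case: m Fm => [|m] Fm; first by rewrite big_ord1 F0 big_geq.
by rewrite big_ord_recr big_ord_recl /= F0 Fm addn0 add0n big_add1 /= big_mkord.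
Qed.

Lemma nbrack0_rec m :
  nbrack0 m = (m == 1) + \sum_(i < m.+1) nbrack0 i * nbrack1 (m - i).
Proof.
rewrite (@sum_ord_drop_ends (fun i => nbrack0 i * nbrack1 (m - i))) ?subnn ?muln0 //.
case: (ltnP 1 m) => [m_gt1|]; last by case: m => [|[|]] // _; rewrite big_geq.
by rewrite /nbrack0 count_trees // gtn_eqF //; apply: eq_bigr => i _; rewrite count_Node0.
Qed.

Lemma nbrack1_rec m :
  nbrack1 m = \sum_(i < m.+1) nbrack0 i * nbrack0 (m - i) +
              \sum_(i < m.+1) nbrack1 i * (nbrack0 (m - i) + nbrack1 (m - i)).
Proof.
rewrite (@sum_ord_drop_ends (fun i => nbrack0 i * nbrack0 (m - i))) ?subnn ?muln0 //.
rewrite (@sum_ord_drop_ends (fun i => nbrack1 i * (nbrack0 (m - i) + nbrack1 (m - i))));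
  rewrite ?subnn ?muln0 //.
case: (ltnP 1 m) => [m_gt1|]; last by case: m => [|[|]] // _; rewrite !big_geq.
rewrite /nbrack1 count_trees // -big_split; apply: eq_bigr => i _.
by rewrite count_Node1 size_trees addnC.
Qed.

Section BracketingSeries.
Local Open Scope ring_scope.
Variable L : nat.
Let F := gf L nbrack0.
Let G := gf L nbrack1.
Let A := gf L (fun m => nbrack0 m.+2).

Lemma gf_nbrack0 : eqmodX L F ('X + F * G).
Proof.
by move=> i lt_iL; rewrite coefD coefX coef_gfM // coef_gf lt_iL -natrD -nbrack0_rec.
Qed.

Lemma gf_nbrack1 : eqmodX L G (F * F + G * (F + G)).
Proof.
by move=> i lt_iL; rewrite gfD coefD !coef_gfM // coef_gf lt_iL -natrD -nbrack1_rec.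
Qed.

Lemma gf_nbrack0_shift : eqmodX L F ('X + 'X^2 * A).
Proof.
move=> i lt_iL; rewrite coefD coefX coefXnM !coef_gf lt_iL.
by case: i lt_iL => [|[|i]] lt_iL; rewrite /= ?addr0 // add0r !subSS subn0 (ltn_trans _ lt_iL).
Qed.

Lemma gf_nbrack0_fix : eqmodX L ('X^3 * A) ('X^3 * ('X * Phi A)).
Proof.
have hF := gf_nbrack0; have hG := gf_nbrack1; have hA := gf_nbrack0_shift.
have hFX : eqmodX L (F - 'X) (F * G) by rewrite {1}hF; apply: eqmodX_eq; ring.
have hX : eqmodX L (F - F * G) 'X by rewrite {1}hF; apply: eqmodX_eq; ring.
have hGG : eqmodX L (G - G * G) (F * F + F * G) by rewrite {1}hG; apply: eqmodX_eq; ring.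
transitivity ('X * (F - 'X)); first by rewrite hA; apply: eqmodX_eq; ring.
transitivity (F ^+ 2 * (F ^+ 2 + (F - 'X))); last by rewrite hA /Phi; apply: eqmodX_eq; ring.
rewrite hFX -{1}hX; transitivity (F ^+ 2 * (G - G * G)); first by apply: eqmodX_eq; ring.
by rewrite hGG; apply: eqmodX_eq; ring.
Qed.

End BracketingSeries.

(** * Walks *)

Definition nbrs (k : nat) : seq nat :=
  match k with
  | 0 => [:: 1; 2]
  | 1 => [:: 2; 3; 0]
  | k.+2 => [:: k.+3; k.+4; k.+1; k]
  end.

Fixpoint nwalks (n h k : nat) : nat :=
  if n is n.+1 then \sum_(v <- nbrs k) nwalks n h v else h == k.

Lemma nwalksS n h k : nwalks n.+1 h k = \sum_(v <- nbrs k) nwalks n h v.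
Proof. by []. Qed.

Lemma nbrs_sym h k : \sum_(v <- nbrs k) (h == v) = \sum_(v <- nbrs h) (v == k).
Proof. by case: h k => [|[|h]] [|[|k]]; rewrite /= !big_cons !big_nil ?eqSS; lia. Qed.

Lemma nwalks_first n h k : nwalks n.+1 h k = \sum_(v <- nbrs h) nwalks n v k.
Proof.
elim: n k => [|n IH] k; first exact: nbrs_sym.
by rewrite nwalksS (eq_bigr _ (fun u _ => IH u)) exchange_big.
Qed.

Lemma nwalksC n h k : nwalks n h k = nwalks n k h.
Proof.
elim: n h k => [|n IH] h k; first by rewrite /= eq_sym.
by rewrite nwalks_first; apply: eq_bigr => v _; rewrite IH.
Qed.

Lemma sum_nbrsS (G : nat -> nat) k :
  \sum_(v <- nbrs k.+1) G v = (k < 2) * G 0 + \sum_(v <- nbrs k) G v.+1.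
Proof. by case: k => [|[|k]]; rewrite /= !big_cons !big_nil; lia. Qed.

Lemma nwalks0_lt2 k : nwalks 0 0 k + nwalks 0 1 k = (k < 2).
Proof. by case: k => [|[|k]]. Qed.

(* Cut the walk at its last visit to 0 (time i): from there it steps to 1 or 2
   and stays >= 1, i.e. it is a walk from 0 or 1 shifted up by one.  Walks that
   never visit 0 are walks from h - 1 shifted up by one. *)
Lemma nwalks_last_visit0 n h k :
  nwalks n.+1 h k.+1 =
  (if h is h'.+1 then nwalks n.+1 h' k else 0) +
  \sum_(i < n.+1) nwalks i h 0 * (nwalks (n - i) 0 k + nwalks (n - i) 1 k).
Proof.
elim: n k => [|n IH] k.
  rewrite nwalksS sum_nbrsS big_ord1 nwalks0_lt2.
  case: h => [|h] /=; last by rewrite muln0 addn0.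
  by rewrite big1_seq ?addn0 ?muln1 ?mul1n.
rewrite nwalksS sum_nbrsS (eq_bigr _ (fun u _ => IH u)) big_split exchange_big /=.
rewrite [in RHS]big_ord_recr /= subnn nwalks0_lt2 mulnC addnCA [X in _ = _ + X]addnC.
congr (_ + (_ + _)); first by case: h {IH} => [|h] //; rewrite big1.
apply: eq_bigr => i _.
by rewrite -big_distrr big_split (subSn (ltnSE (ltn_ord i))).
Qed.

Lemma nwalks00_rec n : nwalks n.+1 0 0 = nwalks n 0 1 + nwalks n 0 2.
Proof. by rewrite nwalksS !big_cons big_nil addn0. Qed.

Lemma nwalks01_rec n :
  nwalks n.+1 0 1 = \sum_(i < n.+1) nwalks i 0 0 * (nwalks (n - i) 0 0 + nwalks (n - i) 0 1).
Proof. by rewrite nwalks_last_visit0; apply: eq_bigr => i _; rewrite (nwalksC _ 1 0). Qed.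

Lemma nwalks02_rec n :
  nwalks n.+1 0 2 = \sum_(i < n.+1) nwalks i 0 0 * (nwalks (n - i) 0 1 + nwalks (n - i) 1 1).
Proof. by rewrite nwalks_last_visit0. Qed.

Lemma nwalks11_rec n :
  nwalks n.+1 1 1 = nwalks n.+1 0 0 +
    \sum_(i < n.+1) nwalks i 0 1 * (nwalks (n - i) 0 0 + nwalks (n - i) 0 1).
Proof.
rewrite nwalks_last_visit0; congr (_ + _).
by apply: eq_bigr => i _; rewrite !(nwalksC _ 1 0).
Qed.

Section WalkSeries.
Local Open Scope ring_scope.
Variable L : nat.
Let E := gf L (fun n => nwalks n 0 0).
Let A := gf L (fun n => nwalks n 0 1).
Let D := gf L (fun n => nwalks n 0 2).
Let C := gf L (fun n => nwalks n 1 1).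

Lemma gf_nwalks00 : eqmodX L E (1 + 'X * (A + D)).
Proof.
move=> [|i] lt_iL; rewrite coefD coefXM coef1 !coef_gf lt_iL ?addr0 //.
by rewrite nwalks00_rec gfD coef_gf (ltnW lt_iL) /= add0r.
Qed.

Lemma gf_nwalks01 : eqmodX L A ('X * (E * (E + A))).
Proof.
move=> [|i] lt_iL; rewrite coefXM coef_gf lt_iL //.
by rewrite nwalks01_rec gfD coef_gfM ?(ltnW lt_iL).
Qed.

Lemma gf_nwalks02 : eqmodX L D ('X * (E * (A + C))).
Proof.
move=> [|i] lt_iL; rewrite coefXM coef_gf lt_iL //.
by rewrite nwalks02_rec gfD coef_gfM ?(ltnW lt_iL).
Qed.

Lemma gf_nwalks11 : eqmodX L C (E + 'X * (A * (E + A))).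
Proof.
move=> [|i] lt_iL; rewrite coefD coefXM !coef_gf lt_iL ?addr0 //.
by rewrite nwalks11_rec gfD coef_gfM ?(ltnW lt_iL) // natrD.
Qed.

Lemma gf_nwalks01_fix : eqmodX L A ('X * Phi A).
Proof.
have hA := gf_nwalks01.
have hD : eqmodX L D (A * (1 + 'X * A)).
  rewrite gf_nwalks02 gf_nwalks11.
  transitivity ('X * (E * (E + A)) * (1 + 'X * A)); first by apply: eqmodX_eq; ring.
  by rewrite -hA.
have hE : eqmodX L E ((1 + 'X * A) ^+ 2).
  by rewrite gf_nwalks00 hD; apply: eqmodX_eq; ring.
by rewrite {1}hA hE.
Qed.

End WalkSeries.

(** * Walks as step sequences *)

Lemma big_tuple_rcons (R : Type) (idx : R) (op : Monoid.com_law idx) (T : finType) n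
    (F : n.+1.-tuple T -> R) :
  \big[op/idx]_(t : n.+1.-tuple T) F t =
  \big[op/idx]_(x : T) \big[op/idx]_(t : n.-tuple T) F [tuple of rcons t x].
Proof.
pose rc (p : T * n.-tuple T) := [tuple of rcons p.2 p.1].
have rc_inj : injective rc by move=> [x s] [y u] /(congr1 val) /rcons_inj [/val_inj -> ->].
have rcK t : rc (last (thead t) (behead t), [tuple of belast (thead t) (behead t)]) = t.
  by apply: val_inj; rewrite /= -lastI [in RHS](tuple_eta t).
rewrite pair_big (reindex rc) //=.
by exists (fun t => (last (thead t) (behead t), [tuple of belast (thead t) (behead t)]))
  => [p _ | t _]; [apply: rc_inj; rewrite rcK | rewrite rcK].
Qed.

Lemma card_predE (T : finType) (P : pred T) : #|[pred x | P x]| = \sum_x P x.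
Proof. by rewrite -sum1_card big_mkcond; apply: eq_bigr => x _; rewrite inE; case: (P x). Qed.

Lemma forall_ordS (P : pred nat) n :
  [forall i : 'I_n.+2, P i] = [forall i : 'I_n.+1, P i] && P n.+1.
Proof.
apply/forallP/andP => [allP | [/forallP allP Pn] i].
  split; last exact: (allP ord_max).
  by apply/forallP => i; exact: (allP (widen_ord (leqnSn _) i)).
have [lt_in | le_ni] := ltnP i n.+1; first exact: (allP (Ordinal lt_in)).
suff -> : nat_of_ord i = n.+1 by [].
by apply/eqP; rewrite eqn_leq le_ni -ltnS ltn_ord.
Qed.

Lemma sum_stepv_nbrs (G : nat -> nat) m :
  \sum_(x : 'I_4) (if (m%:Z - stepv x)%R is Posz v then G v else 0) = \sum_(v <- nbrs m) G v.
Proof.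
rewrite !big_ord_recl big_ord0 /stepv /=; case: m => [|[|m]].
all: by rewrite /= !big_cons big_nil /= ?add0n ?addnS ?addn0 ?subSS ?subn0; lia.
Qed.

Section StepSequences.
Local Open Scope ring_scope.

Definition walk_to n (t : n.-tuple 'I_4) (k : int) : bool :=
  [forall i : 'I_n.+1, 0 <= wpos t i] && (wpos t n == k).

Lemma wposE n (t : n.-tuple 'I_4) i : wpos t i = \sum_(s <- take i (map stepv t)) s.
Proof. by []. Qed.

Lemma wpos_rcons n (t : n.-tuple 'I_4) x i :
  wpos [tuple of rcons t x] i = if (i <= n)%N then wpos t i else wpos t n + stepv x.
Proof.
rewrite !wposE map_rcons -cats1; case: leqP => [le_in | lt_ni].
  by rewrite takel_cat // size_map size_tuple.
rewrite !take_oversize ?size_cat ?size_map ?size_tuple ?addn1 //.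
by rewrite big_cat big_seq1.
Qed.

Lemma walk_to_rcons n (t : n.-tuple 'I_4) x k :
  walk_to [tuple of rcons t x] k = (0 <= k) && walk_to t (k - stepv x).
Proof.
rewrite /walk_to (forall_ordS (fun i => 0 <= wpos [tuple of rcons t x] i)) !wpos_rcons ltnn.
rewrite (eq_forallb (fun i : 'I_n.+1 => _ : _ = (0 <= wpos t i))); last first.
  by move=> i; rewrite wpos_rcons -ltnS ltn_ord.
have -> : (wpos t n + stepv x == k) = (wpos t n == k - stepv x).
  exact: (can2_eq (addrK _) (subrK _)).
by case: eqP => [->|_]; rewrite ?andbF // subrK !andbT andbC.
Qed.

Lemma card_walk_to n k :
  #|[pred t : n.-tuple 'I_4 | walk_to t k]| = if k is Posz m then nwalks n 0 m else 0%N.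
Proof.
elim: n k => [|n IH] k.
  have walk0 (t : 0.-tuple 'I_4) : walk_to t k = (0 == k).
    have wpos0 i : wpos t i = 0 by rewrite wposE (size0nil (size_tuple t)) big_nil.
    rewrite /walk_to wpos0; case: eqP => _; rewrite ?andbF ?andbT //.
    by apply/forallP => i; rewrite wpos0.
  rewrite card_predE (eq_bigr _ (fun t _ => congr1 nat_of_bool (walk0 t))).
  by rewrite sum_nat_const card_tuple mul1n; case: (k) => [[|m]|m].
rewrite card_predE big_tuple_rcons.
under eq_bigr => x _ do under eq_bigr => t _ do rewrite walk_to_rcons.
case: k => [m|m] /=; last by rewrite big1 // => x _; rewrite big1.
rewrite -sum_stepv_nbrs; apply: eq_bigr => x _; rewrite -IH card_predE.
by apply: eq_bigr.
Qed.

End StepSequences.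

Lemma nbrack0_nwalks n : nbrack0 n.+2 = nwalks n 0 1.
Proof.
have hT := eqmodX_mulXnI (@gf_nbrack0_fix (n.+1 + 3)).
have := eqmodX_fixpoint hT (@gf_nwalks01_fix n.+1) (ltnSn n).
rewrite !coef_gf ltnSn ifT; last by rewrite -addSnnS ltn_addr.
by move/eqP; rewrite eqr_nat => /eqP.
Qed.

(* Imported only now: [List] would shadow [seq] and [map]. *)
From Stdlib Require Import List.

Lemma In_mem (T : eqType) (x : T) (s : list T) : In x s <-> x \in s.
Proof.
elim: s => [|y s IH] //=; rewrite inE IH.
by split => [[->|->] | /orP [/eqP ->|->]]; rewrite ?eqxx ?orbT //; [left | right].
Qed.

Lemma uniq_NoDup (T : eqType) (s : list T) : uniq s -> NoDup s.
Proof.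
elim: s => [|x s IH] /=; first by constructor.
by case/andP => x_notin_s us; constructor; [rewrite In_mem; apply/negP | exact: IH].
Qed.

Lemma length_size (T : Type) (s : list T) : length s = size s.
Proof. by elim: s => //= x s ->. Qed.

Theorem proposition5p5 (n : nat) :
  exists s : list bracketing,
    NoDup s /\
    (forall t, In t s <-> (nleaves t = n.+2 /\ bval t = false)) /\
    length s = #|[pred t : n.-tuple 'I_4 | good_walk t]|.
Proof.
exists [seq t <- trees n.+2 | ~~ bval t]; split; last split.
- by apply: uniq_NoDup; rewrite filter_uniq // uniq_trees.
- move=> t; rewrite In_mem mem_filter mem_trees.
  by split => [/andP [/negbTE -> /eqP ->] | [-> ->]]; rewrite ?eqxx.
- rewrite length_size size_filter -/(nbrack0 n.+2) nbrack0_nwalks.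
  exact: esym (card_walk_to n 1).
Qed.
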